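(* Fix $k$. For $j\ge1$ let $$\Delta_j(m)=(-1)^j\big[2^j\psi^{(j-1)}(2m+1)-\psi^{(j-1)}(m+1+k)-\psi^{(j-1)}(m+1-k)\big],$$ and define $x_0(m)=1$, $x_1(m)=0$, and $x_j(m)=\sum_{l=0}^{j-2}\binom{j-1}{l}\Delta_{j-l}(m)x_l(m)$ for $j\ge2$. Then for every $j\in\mathbb{N}$, $$\frac{d\Delta_j}{dm}=-\Delta_{j+1}\qquad\text{and}\qquad\frac{dx_j}{dm}=-x_{j+1}+j\,\Delta_2\,x_{j-1}.$$
   Context: $\psi^{(n)}(z)=\frac{d^{n+1}}{dz^{n+1}}\log\Gamma(z)$ is the polygamma function. The identities are for values of $m$ where none of $2m+1$, $m+1+k$, $m+1-k$ is a non-positive integer. *)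

From Stdlib Require Import Reals List Factorial.
From Coquelicot Require Import Coquelicot.
Open Scope R_scope.

(* Euler's Gamma function on the reals, via Gauss's limit formula
   Gamma(z) = lim_n n! n^z / (z (z+1) ... (z+n)),
   valid for every real z that is not a non-positive integer. *)
Definition Gamma (z : R) : R :=
  real (Lim_seq (fun n : nat =>
     INR (fact n) * Rpower (INR n) z / prod_f_R0 (fun i => z + INR i) n)).

(* Polygamma: psi^(n)(z) = d^(n+1)/dz^(n+1) log Gamma(z).
   On the reals we use log|Gamma| (equal to log Gamma where Gamma > 0;
   all its derivatives of order >= 1 coincide with those of log Gamma). *)
Definition polygamma (n : nat) (z : R) : R :=
  Derive_n (fun t => ln (Rabs (Gamma t))) (S n) z.

Definition Dlt (k : R) (j : nat) (m : R) : R :=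
  (-1) ^ j * (2 ^ j * polygamma (j - 1) (2 * m + 1)
              - polygamma (j - 1) (m + 1 + k)
              - polygamma (j - 1) (m + 1 - k)).

Definition xnext (k : R) (j : nat) (m : R) (L : list R) : R :=
  match j with
  | 0%nat => 1
  | 1%nat => 0
  | S (S j') => sum_f_R0 (fun l => Binomial.C (S j') l * Dlt k (j - l) m * nth l L 0) j'
  end.

Fixpoint xs (k : R) (n : nat) (m : R) : list R :=
  match n with
  | 0%nat => 1 :: nil
  | S n' => let L := xs k n' m in L ++ (xnext k n m L :: nil)
  end.

Definition xseq (k : R) (j : nat) (m : R) : R := nth j (xs k j m) 0.

Definition admissible (k m : R) : Prop :=
  forall n : nat, 2 * m + 1 <> - INR n /\ m + 1 + k <> - INR n /\ m + 1 - k <> - INR n.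

(* Gauss's formula Gamma(y) = lim n! n^y / (y (y+1) ... (y+n)) gives
   log|Gamma(y)| = sum_i t_i(y) with t_0(y) = -log|y| and
   t_i(y) = log i + y log(1 + 1/i) - log|y + i|.  Near any point off the poles
   each termwise derivative series is dominated by C/(i+1)^2, so it may be
   differentiated term by term: psi^(n) is differentiable there with derivative
   psi^(n+1), and the chain rule gives Delta_j' = -Delta_(j+1).  For x_j,
   differentiate the recursion by the Leibniz rule and argue by strong induction;
   Pascal's rule and the absorption identity l C(j-1,l) = (j-1) C(j-2,l-1)
   collapse the result to -x_(j+1) + j Delta_2 x_(j-1). *)

From Stdlib Require Import Reals Lra Lia Psatz List Factorial.
From Coquelicot Require Import Coquelicot.
Open Scope R_scope.

Definition nonpole (y : R) : Prop := forall n : nat, y <> - INR n.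

Definition away_from_poles (c M y : R) : Prop :=
  Rabs y <= M /\ forall i : nat, c * (INR i + 1) <= Rabs (y + INR i).

Lemma nonpole_add_INR_neq0 y i : nonpole y -> y + INR i <> 0.
Proof. intros Hy E. apply (Hy i). lra. Qed.

Lemma away_from_poles_nonpole c M y : 0 < c -> away_from_poles c M y -> nonpole y.
Proof.
  intros Hc [_ Hi] n E. specialize (Hi n).
  rewrite E, Rplus_opp_l, Rabs_R0 in Hi. pose proof (pos_INR n). nra.
Qed.

Lemma nonpole_dist_pos x : nonpole x -> exists d, 0 < d /\ forall i, d <= Rabs (x + INR i).
Proof.
  intros Hx.
  assert (Hfin : forall N, exists d, 0 < d /\ forall i, (i < N)%nat -> d <= Rabs (x + INR i)).
  { induction N as [|N [d [Hd H]]].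
    - exists 1. split; [lra | intros i Hi; lia].
    - exists (Rmin d (Rabs (x + INR N))). split.
      + apply Rmin_glb_lt; [lra | apply Rabs_pos_lt, nonpole_add_INR_neq0, Hx].
      + intros i Hi. destruct (Nat.eq_dec i N) as [->|Hne].
        * apply Rmin_r.
        * eapply Rle_trans; [apply Rmin_l | apply H; lia]. }
  destruct (INR_unbounded (1 - x)) as [N HN].
  destruct (Hfin N) as [d [Hd H]].
  exists (Rmin d 1). split; [apply Rmin_glb_lt; lra |].
  intros i. destruct (Nat.lt_ge_cases i N) as [Hi|Hi].
  - eapply Rle_trans; [apply Rmin_l | apply H, Hi].
  - assert (INR N <= INR i) by (apply le_INR, Hi).
    eapply Rle_trans; [apply Rmin_r |]. rewrite Rabs_pos_eq; lra.
Qed.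

(* With d the distance from x to the poles, on the ball of radius d/2 the pole -i
   is at distance at least d/2, and at least i - M once i is large; [c] covers both. *)
Lemma nonpole_locally_away x : nonpole x -> exists rho c M,
  0 < rho /\ 0 < c /\ 0 < M /\ forall y, Rabs (y - x) < rho -> away_from_poles c M y.
Proof.
  intros Hx. destruct (nonpole_dist_pos x Hx) as [d [Hd Hdist]].
  set (M := Rabs x + d).
  assert (HM : 0 < M) by (unfold M; pose proof (Rabs_pos x); lra).
  exists (d / 2), (Rmin (d / (4 * M + 4)) (/ 4)), M.
  split; [lra |]. split; [apply Rmin_glb_lt; [apply Rdiv_lt_0_compat |]; lra |].
  split; [exact HM |].
  intros y Hy.
  assert (HyM : Rabs y <= M).
  { unfold M. replace y with (x + (y - x)) by ring.
    pose proof (Rabs_triang x (y - x)). lra. }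
  split; [exact HyM |]. intros i.
  assert (Hnear : d / 2 <= Rabs (y + INR i)).
  { pose proof (Hdist i). pose proof (Rabs_triang (y + INR i) (x - y)).
    rewrite <- Rabs_Ropp, Ropp_minus_distr in Hy.
    replace (y + INR i + (x - y)) with (x + INR i) in * by ring. lra. }
  pose proof (pos_INR i).
  destruct (Rle_lt_dec (INR i + 1) (2 * M + 2)) as [Hsmall|Hlarge].
  - apply Rle_trans with (d / (4 * M + 4) * (2 * M + 2)).
    + apply Rmult_le_compat; [apply Rmin_glb; [apply Rlt_le, Rdiv_lt_0_compat|]; lra | lra
                             | apply Rmin_l | exact Hsmall].
    + replace (d / (4 * M + 4) * (2 * M + 2)) with (d / 2) by (field; lra). exact Hnear.
  - assert (Hfar : INR i - M <= Rabs (y + INR i)).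
    { pose proof (Rabs_triang (y + INR i) (- y)). rewrite Rabs_Ropp in *.
      replace (y + INR i + - y) with (INR i) in * by ring.
      rewrite Rabs_pos_eq in * by lra. lra. }
    pose proof (Rmin_r (d / (4 * M + 4)) (/ 4)).
    assert (0 <= Rmin (d / (4 * M + 4)) (/ 4))
      by (apply Rmin_glb; [apply Rlt_le, Rdiv_lt_0_compat |]; lra).
    nra.
Qed.

Lemma locally_nonpole x : nonpole x -> locally x nonpole.
Proof.
  intros Hx. destruct (nonpole_locally_away x Hx) as (rho & c & M & Hr & Hc & _ & H).
  exists (mkposreal rho Hr). intros y Hy.
  exact (away_from_poles_nonpole c M y Hc (H y Hy)).
Qed.

(* [lgamma_term 0 i] is the term t_i of the series for log|Gamma| and
   [lgamma_term r i] its r-th derivative. *)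
Definition lgamma_term (r i : nat) (y : R) : R :=
  match r, i with
  | O, O => - ln (Rabs y)
  | O, S _ => ln (INR i) + y * ln (1 + / INR i) - ln (Rabs (y + INR i))
  | 1%nat, O => - / y
  | 1%nat, S _ => ln (1 + / INR i) - / (y + INR i)
  | S r', _ => (-1) ^ r * INR (fact r') / (y + INR i) ^ r
  end.

Lemma is_derive_ln_Rabs y : y <> 0 -> is_derive (fun t => ln (Rabs t)) y (/ y).
Proof.
  intros Hy.
  assert (Habs : is_derive Rabs y (sign y * 1))
    by (apply (is_derive_Rabs (fun t => t)); [auto_derive; auto | exact Hy]).
  pose proof (is_derive_comp ln Rabs y _ _ (is_derive_ln _ (Rabs_pos_lt _ Hy)) Habs) as D.
  replace (/ y) with (scal (sign y * 1) (/ Rabs y)); [exact D |].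
  unfold scal; simpl; unfold mult; simpl. unfold sign.
  destruct (total_order_T 0 y) as [[H|H]|H].
  - rewrite Rabs_pos_eq by lra. ring.
  - lra.
  - rewrite Rabs_left by lra. field. lra.
Qed.

Lemma is_derive_lgamma_term r i y : nonpole y ->
  is_derive (lgamma_term r i) y (lgamma_term (S r) i y).
Proof.
  intros Hy. pose proof (nonpole_add_INR_neq0 y i Hy) as Hi.
  destruct r as [|[|r]]; [destruct i as [|i] .. |]; unfold lgamma_term.
  - rewrite Rplus_0_r in Hi.
    apply (is_derive_opp (fun t => ln (Rabs t))), is_derive_ln_Rabs, Hi.
  - set (n := INR (S i)) in *.
    replace (ln (1 + / n) - / (y + n)) with (0 + 1 * ln (1 + / n) - / (y + n)) by ring.
    apply (is_derive_minus _ (fun t => ln (Rabs (t + n)))); [auto_derive; auto; ring |].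
    rewrite <- (scal_one (/ (y + n))).
    apply (is_derive_comp (fun t => ln (Rabs t)) (fun t => t + n)).
    + apply is_derive_ln_Rabs, Hi.
    + auto_derive; auto.
  - rewrite Rplus_0_r in *. auto_derive; auto. simpl. field. exact Hi.
  - auto_derive; auto. simpl. field. exact Hi.
  - auto_derive; [apply (pow_nonzero _ (S (S r))), Hi |].
    change (match r with 0%nat => 1 | S _ => INR r + 1 end) with (INR (S r)).
    rewrite !fact_simpl, !S_INR. simpl. repeat rewrite plus_INR, ?mult_INR.
    assert ((y + INR i) ^ r <> 0) by (apply pow_nonzero, Hi).
    field. split; assumption.
Qed.

Lemma Rabs_sub_le a b : Rabs (a - b) <= Rabs a + Rabs b.
Proof. unfold Rminus. rewrite <- (Rabs_Ropp b). apply Rabs_triang. Qed.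

Lemma sq_le_of_Rabs_le y M : Rabs y <= M -> y ^ 2 <= M ^ 2.
Proof. intros H. rewrite <- pow2_abs. apply pow_incr. split; [apply Rabs_pos | exact H]. Qed.

Lemma ln_le_sub1 x : 0 < x -> ln x <= x - 1.
Proof. intros Hx. pose proof (exp_ineq1_le (ln x)). rewrite exp_ln in H by exact Hx. lra. Qed.

Lemma ln_1p_sub_bound c s : 0 < c -> c <= 1 + s -> 0 <= s - ln (1 + s) <= s ^ 2 / c.
Proof.
  intros Hc Hs.
  pose proof (ln_le_sub1 (1 + s) ltac:(lra)) as Hup.
  pose proof (ln_le_sub1 (/ (1 + s)) (Rinv_0_lt_compat (1 + s) ltac:(lra))) as Hlow.
  rewrite ln_Rinv in Hlow by lra.
  split; [lra |].
  apply Rle_trans with (s ^ 2 / (1 + s)).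
  - replace (s ^ 2 / (1 + s)) with (s - 1 + / (1 + s)) by (field; lra). lra.
  - apply Rmult_le_compat_l; [nra | apply Rinv_le_contravar; lra].
Qed.

Lemma inv_INR_sub_ln_bound n : 1 <= n -> Rabs (ln (1 + / n) - / n) <= / n ^ 2.
Proof.
  intros Hn. assert (0 < / n) by (apply Rinv_0_lt_compat; lra).
  destruct (ln_1p_sub_bound 1 (/ n) Rlt_0_1 ltac:(lra)) as [H0 H1].
  rewrite Rabs_minus_sym, Rabs_pos_eq by exact H0.
  replace (/ n ^ 2) with ((/ n) ^ 2 / 1) by (field; lra). exact H1.
Qed.

Lemma ln_Rabs_1p_sub_bound c M s : 0 < c -> c <= Rabs (1 + s) -> Rabs s <= M ->
  Rabs (ln (Rabs (1 + s)) - s) <= (/ c + Rabs (ln c) + 2 * M) * s ^ 2.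
Proof.
  intros Hc Hcs HsM.
  assert (0 < / c) by (apply Rinv_0_lt_compat, Hc).
  pose proof (Rabs_pos (ln c)). pose proof (Rabs_pos s).
  destruct (Rle_lt_dec (-1) s) as [Hs|Hs].
  - rewrite (Rabs_pos_eq (1 + s)) in * by lra.
    destruct (ln_1p_sub_bound c s Hc Hcs) as [Hnn Hle].
    rewrite Rabs_minus_sym, Rabs_pos_eq by exact Hnn.
    unfold Rdiv in Hle. nra.
  - rewrite (Rabs_left (1 + s)) in * by lra.
    assert (Hlow : ln c <= ln (- (1 + s))) by (apply ln_le; lra).
    pose proof (ln_le_sub1 (- (1 + s)) ltac:(lra)).
    pose proof (Rle_abs (- ln c)). rewrite Rabs_Ropp in *.
    rewrite (Rabs_left s) in * by lra.
    assert (Hs2 : 1 <= s ^ 2) by nra.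
    assert (2 * M <= 2 * M * s ^ 2) by nra.
    assert (Rabs (ln c) <= Rabs (ln c) * s ^ 2) by nra.
    assert (0 <= / c * s ^ 2) by nra.
    apply Rabs_le. split; nra.
Qed.

Definition inv_succ_sq (i : nat) : R := / (INR i + 1) ^ 2.

Lemma inv_succ_sq_pos i : 0 < inv_succ_sq i.
Proof. unfold inv_succ_sq. pose proof (pos_INR i). apply Rinv_0_lt_compat. nra. Qed.

Lemma inv_sq_le_inv_succ_sq i : (1 <= i)%nat -> / INR i ^ 2 <= 4 * inv_succ_sq i.
Proof.
  intros Hi. apply le_INR in Hi. change (INR 1) with 1 in Hi. unfold inv_succ_sq.
  replace (4 * / (INR i + 1) ^ 2) with (/ ((INR i + 1) / 2) ^ 2) by (field; lra).
  apply Rinv_le_contravar; [nra | apply pow_incr; lra].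
Qed.

Lemma gauss_log_term_bound c M y n : 0 < c -> 1 <= n -> Rabs y <= M ->
  c * (n + 1) <= Rabs (y + n) ->
  Rabs (ln n + y * ln (1 + / n) - ln (Rabs (y + n)))
  <= (M + (/ c + Rabs (ln c) + 2 * M) * M ^ 2) * / n ^ 2.
Proof.
  intros Hc Hn HyM Hdist.
  set (K1 := / c + Rabs (ln c) + 2 * M).
  assert (HK1 : 0 <= K1).
  { unfold K1. pose proof (Rabs_pos (ln c)). pose proof (Rabs_pos y).
    pose proof (Rinv_0_lt_compat c Hc). lra. }
  set (s := y / n). set (q := / n ^ 2).
  assert (Hq : 0 < q) by (unfold q; apply Rinv_0_lt_compat; nra).
  assert (Hyn : Rabs (y + n) = n * Rabs (1 + s)).
  { replace (y + n) with (n * (1 + s)) by (unfold s; field; lra).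
    rewrite Rabs_mult, Rabs_pos_eq by lra. reflexivity. }
  assert (Hcs : c <= Rabs (1 + s)) by (pose proof (Rabs_pos (1 + s)); nra).
  assert (HsM : Rabs s <= M).
  { unfold s, Rdiv. rewrite Rabs_mult, Rabs_inv, (Rabs_pos_eq n) by lra.
    assert (/ n <= 1) by (rewrite <- Rinv_1; apply Rinv_le_contravar; lra).
    pose proof (Rabs_pos y). assert (0 < / n) by (apply Rinv_0_lt_compat; lra). nra. }
  assert (Hs2 : s ^ 2 <= M ^ 2 * q).
  { replace (s ^ 2) with (y ^ 2 * q) by (unfold s, q; field; lra).
    apply Rmult_le_compat_r; [lra | apply sq_le_of_Rabs_le, HyM]. }
  rewrite Hyn, ln_mult by lra.
  replace (ln n + y * ln (1 + / n) - (ln n + ln (Rabs (1 + s))))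
    with (y * (ln (1 + / n) - / n) - (ln (Rabs (1 + s)) - s)) by (unfold s; field; lra).
  pose proof (inv_INR_sub_ln_bound n Hn) as Hlog. fold q in Hlog.
  pose proof (ln_Rabs_1p_sub_bound c M s Hc Hcs HsM) as Hlog1. fold K1 in Hlog1.
  assert (Hfirst : Rabs (y * (ln (1 + / n) - / n)) <= M * q).
  { rewrite Rabs_mult. apply Rmult_le_compat; auto using Rabs_pos. }
  assert (K1 * s ^ 2 <= K1 * (M ^ 2 * q)) by (apply Rmult_le_compat_l; assumption).
  pose proof (Rabs_sub_le (y * (ln (1 + / n) - / n)) (ln (Rabs (1 + s)) - s)).
  lra.
Qed.

Lemma gauss_log_term_derivative_bound c M y n : 0 < c -> 1 <= n -> Rabs y <= M ->
  c * (n + 1) <= Rabs (y + n) ->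
  Rabs (ln (1 + / n) - / (y + n)) <= (1 + M / c) * / n ^ 2.
Proof.
  intros Hc Hn HyM Hdist.
  assert (Hyn : c * n <= Rabs (y + n)) by lra.
  assert (Hyn0 : y + n <> 0) by (intro E; rewrite E, Rabs_R0 in Hyn; nra).
  replace (ln (1 + / n) - / (y + n)) with ((ln (1 + / n) - / n) + y / (n * (y + n)))
    by (field; lra).
  pose proof (inv_INR_sub_ln_bound n Hn) as Hlog.
  assert (Hsecond : Rabs (y / (n * (y + n))) <= M / c * / n ^ 2).
  { unfold Rdiv. rewrite Rabs_mult, Rabs_inv, Rabs_mult, (Rabs_pos_eq n) by lra.
    replace (M * / c * / n ^ 2) with (M * / (n * (c * n))) by (field; lra).
    apply Rmult_le_compat; [apply Rabs_pos | apply Rlt_le, Rinv_0_lt_compat; nra | exact HyM |].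
    apply Rinv_le_contravar; [apply Rmult_lt_0_compat; [| apply Rmult_lt_0_compat]; lra |].
    apply Rmult_le_compat_l; lra. }
  pose proof (Rabs_triang (ln (1 + / n) - / n) (y / (n * (y + n)))).
  lra.
Qed.

Lemma lgamma_term0_bound c M : 0 < c -> 0 < M -> exists K, forall y, away_from_poles c M y ->
  forall i, Rabs (lgamma_term 0 i y) <= K * inv_succ_sq i.
Proof.
  intros Hc HM.
  set (K := M + (/ c + Rabs (ln c) + 2 * M) * M ^ 2).
  assert (HK : 0 <= K).
  { unfold K. pose proof (Rabs_pos (ln c)). pose proof (Rinv_0_lt_compat c Hc). nra. }
  pose proof (Rabs_pos (ln c)). pose proof (Rabs_pos (ln M)).
  exists (Rabs (ln c) + Rabs (ln M) + 4 * K).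
  intros y [HyM Hdist] [|j].
  - specialize (Hdist 0%nat). change (INR 0) with 0 in Hdist.
    rewrite Rplus_0_l, Rplus_0_r, Rmult_1_r in Hdist.
    replace (inv_succ_sq 0) with 1 by (unfold inv_succ_sq; simpl; field).
    unfold lgamma_term. rewrite Rmult_1_r, Rabs_Ropp.
    assert (ln c <= ln (Rabs y)) by (apply ln_le; lra).
    assert (ln (Rabs y) <= ln M) by (apply ln_le; lra).
    pose proof (Rle_abs (ln M)). pose proof (Rle_abs (- ln c)). rewrite Rabs_Ropp in *.
    apply Rabs_le. split; lra.
  - assert (Hn : 1 <= INR (S j)) by (rewrite S_INR; pose proof (pos_INR j); lra).
    pose proof (gauss_log_term_bound c M y _ Hc Hn HyM (Hdist (S j))) as Hterm. fold K in Hterm.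
    pose proof (inv_sq_le_inv_succ_sq (S j) ltac:(lia)).
    pose proof (inv_succ_sq_pos (S j)).
    change (lgamma_term 0 (S j) y)
      with (ln (INR (S j)) + y * ln (1 + / INR (S j)) - ln (Rabs (y + INR (S j)))).
    nra.
Qed.

Lemma lgamma_term1_bound c M : 0 < c -> 0 < M -> exists K, forall y, away_from_poles c M y ->
  forall i, Rabs (lgamma_term 1 i y) <= K * inv_succ_sq i.
Proof.
  intros Hc HM.
  assert (Hc' : 0 < / c) by (apply Rinv_0_lt_compat, Hc).
  assert (HMc : 0 <= 1 + M / c) by (unfold Rdiv; nra).
  exists (/ c + 4 * (1 + M / c)).
  intros y [HyM Hdist] [|j].
  - specialize (Hdist 0%nat). change (INR 0) with 0 in Hdist.
    rewrite Rplus_0_l, Rplus_0_r, Rmult_1_r in Hdist.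
    replace (inv_succ_sq 0) with 1 by (unfold inv_succ_sq; simpl; field).
    unfold lgamma_term. rewrite Rmult_1_r, Rabs_Ropp, Rabs_inv.
    assert (/ Rabs y <= / c) by (apply Rinv_le_contravar; lra). lra.
  - assert (Hn : 1 <= INR (S j)) by (rewrite S_INR; pose proof (pos_INR j); lra).
    pose proof (gauss_log_term_derivative_bound c M y _ Hc Hn HyM (Hdist (S j))) as Hterm.
    pose proof (inv_sq_le_inv_succ_sq (S j) ltac:(lia)).
    pose proof (inv_succ_sq_pos (S j)).
    change (lgamma_term 1 (S j) y) with (ln (1 + / INR (S j)) - / (y + INR (S j))).
    nra.
Qed.

Lemma lgamma_termSS_bound r c M : 0 < c -> exists K, forall y, away_from_poles c M y ->
  forall i, Rabs (lgamma_term (S (S r)) i y) <= K * inv_succ_sq i.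
Proof.
  intros Hc. exists (INR (fact (S r)) / c ^ S (S r)).
  intros y [_ Hdist] i. specialize (Hdist i).
  pose proof (pos_INR i).
  assert (Hci : 0 < c * (INR i + 1)) by nra.
  assert (Hpow : (c * (INR i + 1)) ^ S (S r) <= Rabs (y + INR i) ^ S (S r))
    by (apply pow_incr; lra).
  assert (Hsq : (INR i + 1) ^ 2 <= (INR i + 1) ^ S (S r)) by (apply Rle_pow; [lra | lia]).
  assert (0 < c ^ S (S r)) by (apply pow_lt, Hc).
  unfold lgamma_term, inv_succ_sq, Rdiv.
  rewrite !Rabs_mult, pow_1_abs, Rmult_1_l, Rabs_inv, <- RPow_abs.
  rewrite (Rabs_pos_eq (INR _)) by apply pos_INR.
  rewrite Rmult_assoc, <- Rinv_mult.
  apply Rmult_le_compat_l; [apply pos_INR |].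
  apply Rinv_le_contravar; [apply Rmult_lt_0_compat; [| apply pow_lt]; nra |].
  rewrite Rpow_mult_distr in Hpow.
  apply Rle_trans with (c ^ S (S r) * (INR i + 1) ^ S (S r)); [| exact Hpow].
  apply Rmult_le_compat_l; lra.
Qed.

Lemma lgamma_term_bound r c M : 0 < c -> 0 < M -> exists K, forall y, away_from_poles c M y ->
  forall i, Rabs (lgamma_term r i y) <= K * inv_succ_sq i.
Proof.
  intros Hc HM. destruct r as [|[|r]].
  - apply lgamma_term0_bound; assumption.
  - apply lgamma_term1_bound; assumption.
  - apply lgamma_termSS_bound, Hc.
Qed.

Lemma is_derive_sum_f_R0 (f : nat -> R -> R) (d : nat -> R) y n :
  (forall i, (i <= n)%nat -> is_derive (f i) y (d i)) ->
  is_derive (fun t => sum_f_R0 (fun i => f i t) n) y (sum_f_R0 d n).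
Proof.
  intros H.
  apply (is_derive_ext (fun t => sum_n (fun i => f i t) n)); [intros t; apply sum_n_Reals |].
  rewrite <- sum_n_Reals. apply (is_derive_sum_n (K := R_AbsRing) (V := R_NormedModule)), H.
Qed.

Lemma ex_series_dominated (a w : nat -> R) K : ex_series w ->
  (forall i, Rabs (a i) <= K * w i) -> ex_series a.
Proof.
  intros Hw Ha. apply (ex_series_le a (fun i => K * w i)); [exact Ha |].
  apply (ex_series_scal_l K w), Hw.
Qed.

Lemma Series_tail_bound (a w : nat -> R) K : ex_series w ->
  (forall i, Rabs (a i) <= K * w i) ->
  forall n, Rabs (Series a - sum_f_R0 a n) <= K * (Series w - sum_f_R0 w n).
Proof.
  intros Hw Ha n.
  assert (Htail : forall b : nat -> R, ex_series b ->
            Series b - sum_f_R0 b n = Series (fun k => b (S n + k)%nat)).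
  { intros b Hb. rewrite (Series_incr_n b (S n)) by (lia || exact Hb). simpl pred. ring. }
  assert (Hw' : ex_series (fun k => w (S n + k)%nat)) by (apply ex_series_incr_n, Hw).
  rewrite !Htail by (exact Hw || exact (ex_series_dominated a w K Hw Ha)).
  rewrite <- Series_scal_l.
  eapply Rle_trans; [apply Series_Rabs |].
  - apply (ex_series_dominated _ (fun k => w (S n + k)%nat) K Hw').
    intros i. rewrite Rabs_Rabsolu. apply Ha.
  - apply Series_le; [intros i; split; [apply Rabs_pos | apply Ha] |].
    apply (ex_series_scal_l K (fun k => w (S n + k)%nat)), Hw'.
Qed.

Lemma CVU_dominated_series (f : nat -> R -> R) (w : nat -> R) x (r : posreal) K :
  ex_series w -> (forall y, Boule x r y -> forall i, Rabs (f i y) <= K * w i) ->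
  CVU (fun n y => sum_f_R0 (fun i => f i y) n) (fun y => Series (fun i => f i y)) x r.
Proof.
  intros Hw Hf eps Heps.
  assert (HK : 0 < Rabs K + 1) by (pose proof (Rabs_pos K); lra).
  assert (Hlim : Un_cv (sum_f_R0 w) (Series w)) by apply is_series_Reals, Series_correct, Hw.
  destruct (Hlim (eps / (Rabs K + 1))) as [N HN]; [apply Rdiv_lt_0_compat; lra |].
  exists N. intros n y Hn Hy.
  pose proof (Series_tail_bound (fun i => f i y) w K Hw (Hf y Hy) n) as Htail.
  specialize (HN n Hn). unfold R_dist in HN. rewrite Rabs_minus_sym in HN.
  pose proof (Rle_abs (K * (Series w - sum_f_R0 w n))) as HKabs.
  rewrite Rabs_mult in HKabs.
  pose proof (Rabs_pos (Series w - sum_f_R0 w n)).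
  apply Rle_lt_trans with ((Rabs K + 1) * Rabs (Series w - sum_f_R0 w n)); [nra |].
  replace eps with ((Rabs K + 1) * (eps / (Rabs K + 1))) by (field; lra).
  apply Rmult_lt_compat_l; assumption.
Qed.

Lemma is_derive_Series (f f' : nat -> R -> R) (w : nat -> R) x rho K :
  0 < rho -> ex_series w ->
  (forall y, Rabs (y - x) < rho -> ex_series (fun i => f i y) /\
     forall i, is_derive (f i) y (f' i y) /\ Rabs (f' i y) <= K * w i) ->
  is_derive (fun y => Series (fun i => f i y)) x (Series (fun i => f' i x)).
Proof.
  intros Hrho Hw H. apply is_derive_Reals.
  apply (CVU_derivable (fun n y => sum_f_R0 (fun i => f i y) n)
           (fun n y => sum_f_R0 (fun i => f' i y) n)
           (fun y => Series (fun i => f i y)) (fun y => Series (fun i => f' i y))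
           x (mkposreal rho Hrho)).
  - apply (CVU_dominated_series f' w x _ K Hw). intros y Hy i. apply (H y Hy).
  - intros y Hy. apply is_series_Reals, Series_correct, (H y Hy).
  - intros n y Hy. apply is_derive_Reals, is_derive_sum_f_R0.
    intros i _. apply (H y Hy).
  - unfold Boule. simpl. rewrite Rminus_eq_0, Rabs_R0. exact Hrho.
Qed.

Lemma is_lim_seq_inv_INR : is_lim_seq (fun n => / INR n) 0.
Proof.
  replace (Finite 0) with (Rbar_inv p_infty) by reflexivity.
  apply is_lim_seq_inv; [apply is_lim_seq_INR | discriminate].
Qed.

Lemma is_series_telescoping_inv_succ :
  is_series (fun i => / (INR i + 1) - / (INR i + 2)) 1.
Proof.
  assert (Hsum : forall n, sum_f_R0 (fun i => / (INR i + 1) - / (INR i + 2)) n = 1 - / INR (n + 2)).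
  { intros n. rewrite plus_INR. change (INR 2) with 2.
    induction n as [|n IH]; [simpl; field |].
    rewrite tech5, IH, S_INR. pose proof (pos_INR n). field. lra. }
  apply is_series_Reals, is_lim_seq_Reals.
  apply (is_lim_seq_ext _ _ _ (fun n => eq_sym (Hsum n))).
  replace (Finite 1) with (Rbar_minus 1 0) by (simpl; f_equal; ring).
  apply is_lim_seq_minus'; [apply is_lim_seq_const |].
  apply (is_lim_seq_incr_n (fun n => / INR n) 2), is_lim_seq_inv_INR.
Qed.

Lemma ex_series_inv_succ_sq : ex_series inv_succ_sq.
Proof.
  apply (ex_series_le inv_succ_sq (fun i => 2 * (/ (INR i + 1) - / (INR i + 2)))).
  - intros i. unfold norm; simpl. unfold abs; simpl.
    rewrite Rabs_pos_eq by apply Rlt_le, inv_succ_sq_pos. unfold inv_succ_sq.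
    pose proof (pos_INR i).
    replace (2 * (/ (INR i + 1) - / (INR i + 2))) with (/ ((INR i + 1) * (INR i + 2) / 2))
      by (field; lra).
    apply Rinv_le_contravar; nra.
  - apply (ex_series_scal_l 2 (fun i => / (INR i + 1) - / (INR i + 2))).
    eexists. apply is_series_telescoping_inv_succ.
Qed.

Definition lgamma_series (r : nat) (y : R) : R := Series (fun i => lgamma_term r i y).

Lemma ex_series_lgamma_term r y : nonpole y -> ex_series (fun i => lgamma_term r i y).
Proof.
  intros Hy. destruct (nonpole_locally_away y Hy) as (rho & c & M & Hr & Hc & HM & Haway).
  destruct (lgamma_term_bound r c M Hc HM) as [K HK].
  apply (ex_series_dominated _ inv_succ_sq K ex_series_inv_succ_sq).
  apply HK, Haway. rewrite Rminus_eq_0, Rabs_R0. exact Hr.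
Qed.

Lemma is_derive_lgamma_series r x : nonpole x ->
  is_derive (lgamma_series r) x (lgamma_series (S r) x).
Proof.
  intros Hx. destruct (nonpole_locally_away x Hx) as (rho & c & M & Hr & Hc & HM & Haway).
  destruct (lgamma_term_bound (S r) c M Hc HM) as [K HK].
  apply (is_derive_Series (lgamma_term r) (lgamma_term (S r)) inv_succ_sq x rho K Hr
           ex_series_inv_succ_sq).
  intros y Hy. pose proof (away_from_poles_nonpole c M y Hc (Haway y Hy)) as Hny.
  split; [apply ex_series_lgamma_term, Hny |].
  intros i. split; [apply is_derive_lgamma_term, Hny | apply HK, Haway, Hy].
Qed.

Definition rising_prod (y : R) (n : nat) : R := prod_f_R0 (fun i => y + INR i) n.

Lemma rising_prod_neq0 y n : nonpole y -> rising_prod y n <> 0.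
Proof.
  intros Hy. induction n as [|n IH]; unfold rising_prod; cbn [prod_f_R0].
  - apply nonpole_add_INR_neq0, Hy.
  - apply Rmult_integral_contrapositive. split; [exact IH | apply nonpole_add_INR_neq0, Hy].
Qed.

Lemma rising_prod_eventually_pos_factor y : exists N, forall n, (N <= n)%nat ->
  exists Q, 0 < Q /\ rising_prod y n = rising_prod y N * Q.
Proof.
  destruct (INR_unbounded (- y)) as [N HN]. exists N.
  intros n Hn. induction Hn as [|n Hn [Q [HQ HPQ]]].
  - exists 1. split; [lra | ring].
  - assert (INR N <= INR n) by (apply le_INR, Hn).
    exists (Q * (y + INR (S n))). split.
    + apply Rmult_lt_0_compat; [exact HQ |]. rewrite S_INR. lra.
    + unfold rising_prod in *. cbn [prod_f_R0]. rewrite HPQ. ring.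
Qed.

Lemma sum_lgamma_term0 y n : nonpole y ->
  sum_f_R0 (fun i => lgamma_term 0 i y) n =
  ln (INR (fact n)) + y * ln (INR n + 1) - ln (Rabs (rising_prod y n)).
Proof.
  intros Hy. induction n as [|n IH].
  - unfold rising_prod. simpl. rewrite Rplus_0_r, Rplus_0_l, ln_1. ring.
  - rewrite tech5, IH.
    change (rising_prod y (S n)) with (rising_prod y n * (y + INR (S n))).
    change (lgamma_term 0 (S n) y) with
      (ln (INR (S n)) + y * ln (1 + / INR (S n)) - ln (Rabs (y + INR (S n)))).
    assert (Hn : 0 < INR (S n)) by (apply lt_0_INR; lia).
    pose proof (INR_fact_lt_0 n).
    pose proof (Rabs_pos_lt _ (rising_prod_neq0 y n Hy)).
    pose proof (Rabs_pos_lt _ (nonpole_add_INR_neq0 y (S n) Hy)).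
    assert (0 < 1 + / INR (S n)) by (pose proof (Rinv_0_lt_compat _ Hn); lra).
    replace (INR (S n) + 1) with (INR (S n) * (1 + / INR (S n))) by (field; lra).
    rewrite fact_simpl, mult_INR, Rabs_mult, !ln_mult by assumption.
    rewrite S_INR. ring.
Qed.

Definition gauss_seq (y : R) (n : nat) : R :=
  INR (fact n) * Rpower (INR n) y / rising_prod y n.

Lemma Rabs_gauss_seq y n : nonpole y -> (1 <= n)%nat ->
  Rabs (gauss_seq y n) = exp (sum_f_R0 (fun i => lgamma_term 0 i y) n - y * ln (1 + / INR n)).
Proof.
  intros Hy Hn. rewrite sum_lgamma_term0 by exact Hy.
  assert (Hn0 : 0 < INR n) by (apply lt_0_INR; lia).
  assert (0 < 1 + / INR n) by (pose proof (Rinv_0_lt_compat _ Hn0); lra).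
  replace (INR n + 1) with (INR n * (1 + / INR n)) by (field; lra).
  rewrite ln_mult by assumption.
  pose proof (INR_fact_lt_0 n). pose proof (rising_prod_neq0 y n Hy).
  replace (ln (INR (fact n)) + y * (ln (INR n) + ln (1 + / INR n)) -
           ln (Rabs (rising_prod y n)) - y * ln (1 + / INR n))
    with (ln (INR (fact n)) + y * ln (INR n) - ln (Rabs (rising_prod y n))) by ring.
  unfold Rminus. rewrite !exp_plus, exp_Ropp, exp_ln, exp_ln by (try apply Rabs_pos_lt; assumption).
  unfold gauss_seq, Rpower, Rdiv.
  rewrite !Rabs_mult, Rabs_inv, !Rabs_pos_eq by (apply Rlt_le; try apply exp_pos; assumption).
  rewrite Rmult_comm with (r1 := y). reflexivity.
Qed.

Lemma is_lim_seq_Rabs_gauss_seq y : nonpole y ->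
  is_lim_seq (fun n => Rabs (gauss_seq y n)) (exp (lgamma_series 0 y)).
Proof.
  intros Hy.
  apply (is_lim_seq_ext_loc
           (fun n => exp (sum_f_R0 (fun i => lgamma_term 0 i y) n - y * ln (1 + / INR n)))).
  { exists 1%nat. intros n Hn. symmetry. apply Rabs_gauss_seq; assumption. }
  apply is_lim_seq_continuous; [apply derivable_continuous_pt, derivable_pt_exp |].
  replace (lgamma_series 0 y) with (lgamma_series 0 y - y * ln (1 + 0))
    by (rewrite Rplus_0_r, ln_1; ring).
  apply is_lim_seq_minus'.
  - apply is_lim_seq_Reals, is_series_Reals, Series_correct, ex_series_lgamma_term, Hy.
  - apply is_lim_seq_mult'; [apply is_lim_seq_const |].
    apply (is_lim_seq_continuous ln).
    + apply derivable_continuous_pt. exists (/ (1 + 0)). apply derivable_pt_lim_ln. lra.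
    + apply is_lim_seq_plus'; [apply is_lim_seq_const | apply is_lim_seq_inv_INR].
Qed.

Lemma gauss_seq_eventually_sign y : nonpole y ->
  exists s, Rabs s = 1 /\ eventually (fun n => gauss_seq y n = s * Rabs (gauss_seq y n)).
Proof.
  intros Hy. destruct (rising_prod_eventually_pos_factor y) as [N HN].
  pose proof (rising_prod_neq0 y N Hy) as HPN.
  exists (Rabs (rising_prod y N) / rising_prod y N). split.
  { unfold Rdiv. rewrite Rabs_mult, Rabs_inv, Rabs_Rabsolu. apply Rinv_r, Rabs_no_R0, HPN. }
  exists N. intros n Hn. destruct (HN n Hn) as [Q [HQ HPQ]].
  assert (HA : 0 < INR (fact n) * Rpower (INR n) y)
    by (apply Rmult_lt_0_compat; [apply INR_fact_lt_0 | apply exp_pos]).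
  pose proof (Rabs_pos_lt _ HPN).
  unfold gauss_seq. rewrite HPQ.
  set (A := INR (fact n) * Rpower (INR n) y) in *.
  unfold Rdiv. rewrite Rabs_mult, Rabs_inv, Rabs_mult, (Rabs_pos_eq A), (Rabs_pos_eq Q) by lra.
  field. split; lra.
Qed.

Lemma ln_Rabs_Gamma y : nonpole y -> ln (Rabs (Gamma y)) = lgamma_series 0 y.
Proof.
  intros Hy. destruct (gauss_seq_eventually_sign y Hy) as [s [Hs Hsign]].
  assert (Hlim : is_lim_seq (gauss_seq y) (s * exp (lgamma_series 0 y))).
  { apply (is_lim_seq_ext_loc (fun n => s * Rabs (gauss_seq y n))).
    - apply (filter_imp _ _ (fun n H => eq_sym H) Hsign).
    - apply is_lim_seq_mult'; [apply is_lim_seq_const | apply is_lim_seq_Rabs_gauss_seq, Hy]. }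
  change (Gamma y) with (real (Lim_seq (gauss_seq y))).
  rewrite (is_lim_seq_unique _ _ Hlim). simpl.
  rewrite Rabs_mult, Hs, Rmult_1_l, Rabs_pos_eq by apply Rlt_le, exp_pos.
  apply ln_exp.
Qed.

Lemma Derive_n_ln_Rabs_Gamma r y : nonpole y ->
  Derive_n (fun t => ln (Rabs (Gamma t))) r y = lgamma_series r y.
Proof.
  revert y. induction r as [|r IH]; intros y Hy; simpl.
  - apply ln_Rabs_Gamma, Hy.
  - rewrite (Derive_ext_loc _ (lgamma_series r)).
    + apply is_derive_unique, is_derive_lgamma_series, Hy.
    + apply (filter_imp nonpole); [exact IH | apply locally_nonpole, Hy].
Qed.

Lemma is_derive_polygamma n y : nonpole y -> is_derive (polygamma n) y (polygamma (S n) y).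
Proof.
  intros Hy. unfold polygamma. rewrite Derive_n_ln_Rabs_Gamma by exact Hy.
  apply (is_derive_ext_loc (lgamma_series (S n))).
  - apply (filter_imp nonpole); [| apply locally_nonpole, Hy].
    intros t Ht. symmetry. apply Derive_n_ln_Rabs_Gamma, Ht.
  - apply is_derive_lgamma_series, Hy.
Qed.

Lemma Derive_polygamma n y : nonpole y -> Derive (polygamma n) y = polygamma (S n) y.
Proof. intros Hy. apply is_derive_unique, is_derive_polygamma, Hy. Qed.

Lemma is_derive_Dlt k j m : (1 <= j)%nat -> admissible k m ->
  is_derive (Dlt k j) m (- Dlt k (S j) m).
Proof.
  intros Hj Ha. destruct j as [|j]; [lia |].
  assert (H1 : nonpole (2 * m + 1)) by (intros n; apply (Ha n)).
  assert (H2 : nonpole (m + 1 + k)) by (intros n; apply (Ha n)).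
  assert (H3 : nonpole (m + 1 - k)) by (intros n; apply (Ha n)).
  unfold Dlt. simpl (S j - 1)%nat. simpl (S (S j) - 1)%nat. rewrite Nat.sub_0_r.
  auto_derive.
  - repeat split; eexists; apply is_derive_polygamma; assumption.
  - rewrite !Derive_polygamma by assumption. cbn [pow]. unfold Rminus. ring.
Qed.

Lemma binom_n_0 n : Binomial.C n 0 = 1.
Proof.
  unfold Binomial.C. rewrite Nat.sub_0_r. simpl. pose proof (INR_fact_lt_0 n). field. lra.
Qed.

Lemma binom_n_n n : Binomial.C n n = 1.
Proof.
  unfold Binomial.C. rewrite Nat.sub_diag. simpl. pose proof (INR_fact_lt_0 n). field. lra.
Qed.

Lemma binom_absorption n l : (l <= n)%nat ->
  INR (S l) * Binomial.C (S n) (S l) = INR (S n) * Binomial.C n l.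
Proof.
  intros H. unfold Binomial.C. change (S n - S l)%nat with (n - l)%nat.
  rewrite !fact_simpl, !mult_INR.
  pose proof (INR_fact_lt_0 n). pose proof (INR_fact_lt_0 l). pose proof (INR_fact_lt_0 (n - l)).
  assert (0 < INR (S l)) by (apply lt_0_INR; lia).
  field. lra.
Qed.

Section BinomialRecursion.

Variables a x : nat -> R.
Hypothesis x_1 : x 1%nat = 0.
Hypothesis x_SS : forall p,
  x (S (S p)) = sum_f_R0 (fun l => Binomial.C (S p) l * a (S (S p) - l)%nat * x l) p.

Lemma binomial_recursion_pascal n :
  x (S (S (S n))) =
  sum_f_R0 (fun l => Binomial.C (S n) l * a (S (S (S n) - l)) * x l) n + a 2%nat * x (S n)
  + sum_f_R0 (fun l => Binomial.C (S n) l * a (S (S n) - l)%nat * x (S l)) n.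
Proof.
  assert (Hext : sum_f_R0 (fun l => Binomial.C (S n) l * a (S (S (S n) - l)) * x l) n
                 + a 2%nat * x (S n)
               = a (S (S (S n))) * x 0%nat
                 + sum_f_R0 (fun l => Binomial.C (S n) (S l) * a (S (S n) - l)%nat * x (S l)) n).
  { transitivity (sum_f_R0 (fun l => Binomial.C (S n) l * a (S (S (S n) - l)) * x l) (S n)).
    - rewrite tech5, binom_n_n. replace (S (S (S n) - S n)) with 2%nat by lia. ring.
    - rewrite decomp_sum by lia. simpl pred. rewrite binom_n_0, Nat.sub_0_r, Rmult_1_l.
      f_equal. apply sum_eq. intros l Hl.
      replace (S (S (S n) - S l)) with (S (S n) - l)%nat by lia. reflexivity. }
  rewrite Hext, x_SS, decomp_sum by lia. simpl pred.
  rewrite binom_n_0, Nat.sub_0_r, Rmult_1_l.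
  rewrite (sum_eq _ (fun l => Binomial.C (S n) (S l) * a (S (S n) - l)%nat * x (S l)
                           + Binomial.C (S n) l * a (S (S n) - l)%nat * x (S l))).
  - rewrite plus_sum. ring.
  - intros l Hl. rewrite <- pascal by lia.
    change (S (S (S n)) - S l)%nat with (S (S n) - l)%nat. ring.
Qed.

Lemma binomial_recursion_absorption n :
  sum_f_R0 (fun l => Binomial.C (S n) l * INR l * a (S (S n) - l)%nat * x (l - 1)%nat) n
  = INR (S n) * x (S n).
Proof.
  destruct n as [|n].
  - simpl. rewrite x_1. ring.
  - rewrite decomp_sum by lia. simpl pred. rewrite x_SS, scal_sum.
    simpl (INR 0). rewrite Rmult_0_r, !Rmult_0_l, Rplus_0_l.
    apply sum_eq. intros l Hl.
    replace (S l - 1)%nat with l by lia.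
    change (S (S (S n)) - S l)%nat with (S (S n) - l)%nat.
    rewrite (Rmult_comm (Binomial.C (S (S n)) (S l))), binom_absorption by lia. ring.
Qed.

(* The left side is the Leibniz-rule derivative of the recursion for x_(n+2)
   when a_i' = - a_(i+1) and x_l' = - x_(l+1) + l a_2 x_(l-1). *)
Lemma binomial_recursion_derivative n :
  sum_f_R0 (fun l => Binomial.C (S n) l *
    (- a (S (S (S n) - l)) * x l
     + a (S (S n) - l)%nat * (- x (S l) + INR l * a 2%nat * x (l - 1)%nat))) n
  = - x (S (S (S n))) + INR (S (S n)) * a 2%nat * x (S n).
Proof.
  set (T1 := sum_f_R0 (fun l => Binomial.C (S n) l * a (S (S (S n) - l)) * x l) n).
  set (T2 := sum_f_R0 (fun l => Binomial.C (S n) l * a (S (S n) - l)%nat * x (S l)) n).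
  set (T3 := sum_f_R0
               (fun l => Binomial.C (S n) l * INR l * a (S (S n) - l)%nat * x (l - 1)%nat) n).
  transitivity (a 2%nat * T3 - T1 - T2).
  - unfold T1, T2, T3. rewrite scal_sum, <- !minus_sum. apply sum_eq. intros l _. ring.
  - rewrite binomial_recursion_pascal. fold T1 T2. unfold T3.
    rewrite binomial_recursion_absorption, (S_INR (S n)). ring.
Qed.

End BinomialRecursion.

Lemma xs_S k n m : xs k (S n) m = xs k n m ++ xnext k (S n) m (xs k n m) :: nil.
Proof. reflexivity. Qed.

Lemma length_xs k n m : length (xs k n m) = S n.
Proof. induction n as [|n IH]; [reflexivity |]. rewrite xs_S, length_app, IH. simpl. lia. Qed.

Lemma nth_xs k n m l : (l <= n)%nat -> nth l (xs k n m) 0 = xseq k l m.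
Proof.
  induction n as [|n IH]; intros Hl.
  - replace l with 0%nat by lia. reflexivity.
  - destruct (Nat.eq_dec l (S n)) as [->|Hne]; [reflexivity |].
    rewrite xs_S, app_nth1 by (rewrite length_xs; lia). apply IH. lia.
Qed.

Lemma xseq_0 k m : xseq k 0 m = 1.
Proof. reflexivity. Qed.

Lemma xseq_1 k m : xseq k 1 m = 0.
Proof. reflexivity. Qed.

Lemma xseq_SS k p m : xseq k (S (S p)) m =
  sum_f_R0 (fun l => Binomial.C (S p) l * Dlt k (S (S p) - l) m * xseq k l m) p.
Proof.
  unfold xseq at 1. rewrite xs_S, app_nth2 by (rewrite length_xs; lia).
  rewrite length_xs, Nat.sub_diag. cbn [nth xnext].
  apply sum_eq. intros l Hl. rewrite nth_xs by lia. reflexivity.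
Qed.

Lemma is_derive_xseq k j m : admissible k m ->
  is_derive (xseq k j) m (- xseq k (S j) m + INR j * Dlt k 2 m * xseq k (j - 1) m).
Proof.
  intros Ha. induction j as [j IH] using Wf_nat.lt_wf_ind.
  destruct j as [|[|n]].
  - apply (is_derive_ext (fun _ => 1)); [intros t; reflexivity |].
    rewrite xseq_1. auto_derive; [exact I | simpl; ring].
  - apply (is_derive_ext (fun _ => 0)); [intros t; reflexivity |].
    rewrite xseq_SS. simpl (1 - 1)%nat. simpl sum_f_R0. rewrite binom_n_0, !xseq_0.
    auto_derive; [exact I | simpl; ring].
  - apply (is_derive_ext
             (fun t => sum_f_R0 (fun l => Binomial.C (S n) l * Dlt k (S (S n) - l) t * xseq k l t) n)).
    { intros t. symmetry. apply xseq_SS. }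
    pose proof (binomial_recursion_derivative (fun i => Dlt k i m) (fun l => xseq k l m)
                  (xseq_1 k m) (fun p => xseq_SS k p m) n) as E.
    cbn beta in E. replace (S (S n) - 1)%nat with (S n) by lia. rewrite <- E.
    apply is_derive_sum_f_R0. intros l Hl.
    pose proof (IH l ltac:(lia)) as HX.
    pose proof (is_derive_Dlt k (S (S n) - l) m ltac:(lia) Ha) as HD.
    remember (S (S n) - l)%nat as i.
    auto_derive.
    + split; [eexists; exact HD | split; [eexists; exact HX | exact I]].
    + replace (Derive (fun t => Dlt k i t) m) with (- Dlt k (S i) m)
        by (symmetry; apply is_derive_unique, HD).
      replace (Derive (fun t => xseq k l t) m)
        with (- xseq k (S l) m + INR l * Dlt k 2 m * xseq k (l - 1) m)
        by (symmetry; apply is_derive_unique, HX).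
      ring.
Qed.

Theorem lemma1 (k : R) :
  (forall (j : nat) (m : R), (1 <= j)%nat -> admissible k m ->
     is_derive (Dlt k j) m (- Dlt k (S j) m)) /\
  (forall (j : nat) (m : R), admissible k m ->
     is_derive (xseq k j) m
       (- xseq k (S j) m + INR j * Dlt k 2 m * xseq k (j - 1) m)).
Proof.
  split.
  - intros j m Hj Ha. exact (is_derive_Dlt k j m Hj Ha).
  - intros j m Ha. exact (is_derive_xseq k j m Ha).
Qed.
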